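(* Let $x=(x_k)_{k\in\mathbb{Z}}$ be a sequence with $x_k\in\{-1,0,1,2,\dots\}$ for all $k$, and let $T$ be its record graph. Let $i\in\mathbb{Z}$ satisfy $L_x(i)>-\infty$. Then: \begin{enumerate} \item the number of children of $i$ in $T$ is $d_1(i)=x_{i-1}+1$; \item if $d_1(i)=n>0$ and $i_n<i_{n-1}<\dots<i_1$ are the children of $i$, then for each $m$, $m=x_{i-1}+1-y(i_m,i)$; \item if $d_1(i)=n>0$ and $m\in\{1,\dots,n\}$, then an integer $i'<i$ is the $m$-th child $i_m$ of $i$ if and only if $i'$ is the largest integer in $\{L_x(i),\dots,i-1\}$ satisfying $y(i',i)=x_{i-1}+1-m$. \end{enumerate}
   Context: Write $y(j,k)=\sum_{l=j}^{k-1}x_l$ for $j<k$. The record map is $R_x(i)=\inf\{n>i: y(i,n)\ge0\}$ if this set is nonempty, and $R_x(i)=i$ otherwise; the record graph has vertex set $\mathbb{Z}$ and directed edges $i\to R_x(i)$ for $R_x(i)\ne i$; the children of $i$ are the $j\ne i$ with $R_x(j)=i$. Define $L_x(i)=\inf\{j<i: y(k,i)\ge0\text{ for all }j\le k<i\}\in\mathbb{Z}\cup\{-\infty\}$ if this set is nonempty, and $L_x(i)=i$ otherwise. *)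

From Stdlib Require Import ZArith List Sorted.
Open Scope Z_scope.

Fixpoint sumx (x : Z -> Z) (j : Z) (n : nat) : Z :=
  match n with
  | O => 0
  | S n' => sumx x j n' + x (j + Z.of_nat n')
  end.

(* y(j,k) = sum_{l=j}^{k-1} x_l  (only used for j < k; it is 0 when k <= j) *)
Definition y (x : Z -> Z) (j k : Z) : Z := sumx x j (Z.to_nat (k - j)).

Definition R_is (x : Z -> Z) (i n : Z) : Prop :=
  (i < n /\ 0 <= y x i n /\ forall m, i < m -> 0 <= y x i m -> n <= m)
  \/ ((~ exists m, i < m /\ 0 <= y x i m) /\ n = i).

Definition Lset (x : Z -> Z) (i j : Z) : Prop :=
  j < i /\ forall k, j <= k < i -> 0 <= y x k i.

(* L_is x i l  <->  L_x(i) = l, with l a (finite) integer *)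
Definition L_is (x : Z -> Z) (i l : Z) : Prop :=
  (Lset x i l /\ forall j, Lset x i j -> l <= j)
  \/ ((~ exists j, Lset x i j) /\ l = i).

Definition child (x : Z -> Z) (i j : Z) : Prop := j <> i /\ R_is x j i.

(** Write F(k) = y(k,i).  By the definition of the record map, j is a child
    of i exactly when F(j) >= 0 and F(j) < F(m) for all j < m < i, i.e. when j
    is a strict record of F read leftwards from i-1.  Since x >= -1, F drops by
    at most one per step to the left, so successive records take the values
    x_{i-1}, x_{i-1}-1, ... with no gap.  F is nonnegative on [L_x(i), i) and
    negative at L_x(i)-1, so the last record has value 0: there are x_{i-1}+1
    children, and the m-th one is the rightmost position with value
    x_{i-1}+1-m. *)

From Stdlib Require Import ZArith List Sorted Lia.
Open Scope Z_scope.

Section PartialSums.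

Variable x : Z -> Z.

Lemma sumx_add j a b :
  sumx x j (a + b) = sumx x j a + sumx x (j + Z.of_nat a) b.
Proof.
  induction b as [|b IH]; simpl.
  - rewrite Nat.add_0_r; lia.
  - rewrite Nat.add_succ_r; simpl; rewrite IH.
    replace (j + Z.of_nat (a + b)) with (j + Z.of_nat a + Z.of_nat b) by lia.
    lia.
Qed.

Lemma y_split j k m : j <= k <= m -> y x j m = y x j k + y x k m.
Proof.
  intros Hjkm; unfold y.
  replace (Z.to_nat (m - j)) with (Z.to_nat (k - j) + Z.to_nat (m - k))%nat
    by lia.
  rewrite sumx_add; do 2 f_equal; lia.
Qed.

Lemma y_empty j k : k <= j -> y x j k = 0.
Proof.
  intros Hkj; unfold y; replace (Z.to_nat (k - j)) with 0%nat by lia.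
  reflexivity.
Qed.

Lemma y_pred k : y x (k - 1) k = x (k - 1).
Proof.
  unfold y; replace (Z.to_nat (k - (k - 1))) with 1%nat by lia.
  simpl; f_equal; lia.
Qed.

Lemma y_pred_lb (hx : forall k, -1 <= x k) i k : y x k i - 1 <= y x (k - 1) i.
Proof.
  destruct (Z_le_gt_dec k i) as [Hki|Hki].
  - rewrite (y_split (k - 1) k i), y_pred by lia.
    specialize (hx (k - 1)); lia.
  - rewrite !y_empty by lia; lia.
Qed.

End PartialSums.

Lemma child_iff x i j :
  child x i j <->
  j < i /\ 0 <= y x j i /\ forall m, j < m < i -> y x j i < y x m i.
Proof.
  unfold child, R_is; split.
  - intros [Hne [(Hji & Hy & Hfirst) | (_ & ->)]]; [|congruence].
    split; [lia | split; [lia |]].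
    intros m Hm; rewrite (y_split x j m i) by lia.
    assert (~ 0 <= y x j m) by (intro Hc; specialize (Hfirst m ltac:(lia) Hc); lia).
    lia.
  - intros (Hji & Hy & Hrec); split; [lia | left].
    split; [lia | split; [lia |]].
    intros m Hjm Hym; destruct (Z_lt_le_dec m i) as [Hmi|]; [|lia].
    specialize (Hrec m ltac:(lia)); rewrite (y_split x j m i) in Hrec by lia.
    lia.
Qed.

Section LeftBoundary.

Variables (x : Z -> Z) (i l : Z).
Hypothesis hL : L_is x i l.

Lemma L_le : l <= i.
Proof. destruct hL as [((Hli & _) & _) | (_ & ->)]; lia. Qed.

Lemma L_minimal j : Lset x i j -> l <= j.
Proof.
  intros Hj; destruct hL as [(_ & Hmin) | (Hnone & _)]; [auto |].
  exfalso; eauto.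
Qed.

Lemma y_nonneg_from_L k : l <= k < i -> 0 <= y x k i.
Proof.
  intros Hk; destruct hL as [((_ & Hnonneg) & _) | (_ & ->)]; [|lia].
  apply Hnonneg; lia.
Qed.

Lemma not_Lset_pred_L : ~ Lset x i (l - 1).
Proof.
  intros H; destruct hL as [(_ & Hmin) | (Hnone & _)].
  - specialize (Hmin _ H); lia.
  - eauto.
Qed.

Lemma y_neg_pred_L : y x (l - 1) i < 0.
Proof.
  destruct (Z_lt_le_dec (y x (l - 1) i) 0) as [|Hge]; [assumption |].
  exfalso; apply not_Lset_pred_L.
  split; [pose proof L_le; lia |].
  intros k Hk; destruct (Z.eq_dec k (l - 1)) as [->|]; [exact Hge |].
  apply y_nonneg_from_L; lia.
Qed.

Lemma child_iff_L j :
  child x i j <-> l <= j < i /\ forall m, j < m < i -> y x j i < y x m i.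
Proof.
  rewrite child_iff; split.
  - intros (Hji & Hy & Hrec); split; [split; [|lia] | exact Hrec].
    apply L_minimal; split; [lia |].
    intros k Hk; destruct (Z.eq_dec k j) as [->|]; [exact Hy |].
    specialize (Hrec k ltac:(lia)); lia.
  - intros (Hj & Hrec); split; [lia |].
    split; [apply y_nonneg_from_L; lia | exact Hrec].
Qed.

End LeftBoundary.

Section Records.

Variable F : Z -> Z.

Fixpoint records (j : Z) (n : nat) (b : Z) : list Z :=
  match n with
  | O => nil
  | S n' =>
      if F j <? b then j :: records (j - 1) n' (F j)
      else records (j - 1) n' b
  end.

Lemma In_records n : forall j b a,
  In a (records j n b) <->
  j - Z.of_nat n < a <= j /\ F a < b /\ forall m, a < m <= j -> F a < F m.
Proof.
  induction n as [|n IH]; intros j b a; simpl.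
  - split; [tauto | lia].
  - destruct (Z.ltb_spec (F j) b) as [Hj|Hj]; [simpl |]; rewrite IH; split.
    + intros [<- | (Ha & Hab & Hrec)]; [split; [lia | split; [lia | intros; lia]] |].
      split; [lia | split; [lia |]].
      intros m Hm; destruct (Z.eq_dec m j) as [->|]; [lia | apply Hrec; lia].
    + intros (Ha & Hab & Hrec); destruct (Z.eq_dec a j); [left; lia | right].
      split; [lia | split; [apply Hrec; lia | intros; apply Hrec; lia]].
    + intros (Ha & Hab & Hrec); split; [lia | split; [lia |]].
      intros m Hm; destruct (Z.eq_dec m j) as [->|]; [lia | apply Hrec; lia].
    + intros (Ha & Hab & Hrec); destruct (Z.eq_dec a j) as [->|]; [lia |].
      split; [lia | split; [lia | intros; apply Hrec; lia]].
Qed.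

Lemma In_records_top n j a :
  In a (records j n (F j + 1)) <->
  j - Z.of_nat n < a <= j /\ forall m, a < m <= j -> F a < F m.
Proof.
  rewrite In_records; split; [tauto |].
  intros (Ha & Hrec); split; [exact Ha | split; [|exact Hrec]].
  destruct (Z.eq_dec a j) as [->|]; [lia | specialize (Hrec j ltac:(lia)); lia].
Qed.

Lemma records_sorted n : forall j b, StronglySorted Z.gt (records j n b).
Proof.
  induction n as [|n IH]; intros j b; simpl; [constructor |].
  destruct (F j <? b); [constructor | auto]; [auto |].
  apply Forall_forall; intros a Ha; apply In_records in Ha; lia.
Qed.

Lemma record_rightmost lo j a :
  lo <= a <= j -> (forall m, a < m <= j -> F a < F m) ->
  forall a', a' = a <->
    lo <= a' <= j /\ F a' = F a /\ forall m, lo <= m <= j -> F m = F a -> m <= a'.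
Proof.
  intros Ha Hrec a'; split.
  - intros ->; split; [exact Ha | split; [reflexivity |]].
    intros m Hm HFm; destruct (Z_le_gt_dec m a); [assumption |].
    specialize (Hrec m ltac:(lia)); lia.
  - intros (Ha' & HFa' & Hright); specialize (Hright a Ha eq_refl).
    destruct (Z.eq_dec a' a); [assumption |].
    specialize (Hrec a' ltac:(lia)); lia.
Qed.

Hypothesis F_pred_lb : forall k, F k - 1 <= F (k - 1).

(** The bound is met without gaps because F drops by at most one per step,
    and all the way down to 0 because F is negative just left of the window. *)
Lemma records_values n : forall j b,
  0 <= b <= F j + 1 -> F (j - Z.of_nat n) < 0 ->
  (forall k, j - Z.of_nat n < k <= j -> 0 <= F k) ->
  length (records j n b) = Z.to_nat b /\
  forall k, (k < length (records j n b))%nat ->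
    F (nth k (records j n b) 0) = b - 1 - Z.of_nat k.
Proof.
  induction n as [|n IH]; intros j b Hb Hout Hin; simpl.
  - rewrite Z.sub_0_r in Hout; split; [lia | simpl; lia].
  - pose proof (F_pred_lb j) as Hstep.
    assert (Hwin : forall k, j - 1 - Z.of_nat n < k <= j - 1 -> 0 <= F k)
      by (intros k Hk; apply Hin; lia).
    replace (j - Z.of_nat (S n)) with (j - 1 - Z.of_nat n) in Hout by lia.
    destruct (Z.ltb_spec (F j) b) as [Hj|Hj].
    + assert (0 <= F j) by (apply Hin; lia).
      destruct (IH (j - 1) (F j) ltac:(lia) Hout Hwin) as [Hlen Hval].
      simpl; split; [rewrite Hlen; lia |].
      intros [|k] Hk; simpl; [lia |].
      simpl in Hk; rewrite Hval by lia; lia.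
    + apply IH; [lia | exact Hout | exact Hwin].
Qed.

End Records.

Theorem lemma4p2 (x : Z -> Z) (hx : forall k, -1 <= x k) (i l : Z)
  (hL : L_is x i l) :
  exists s : list Z,
    StronglySorted Z.gt s /\
    (forall j, child x i j <-> In j s) /\
    (* 1. *)
    Z.of_nat (length s) = x (i - 1) + 1 /\
    (* 2. *)
    (forall m : nat, (1 <= m <= length s)%nat ->
       Z.of_nat m = x (i - 1) + 1 - y x (nth (m - 1) s 0) i) /\
    (* 3. *)
    (forall m : nat, (1 <= m <= length s)%nat ->
       forall i', i' < i ->
         (i' = nth (m - 1) s 0 <->
          (l <= i' <= i - 1 /\ y x i' i = x (i - 1) + 1 - Z.of_nat m /\
           forall j, l <= j <= i - 1 -> y x j i = x (i - 1) + 1 - Z.of_nat m -> j <= i'))).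
Proof.
  pose (F := fun k => y x k i).
  pose (n := Z.to_nat (i - l)).
  assert (Hn : Z.of_nat n = i - l) by (pose proof (L_le x i l hL); unfold n; lia).
  assert (Hlast : y x (i - 1) i = x (i - 1)) by apply y_pred.
  exists (records F (i - 1) n (F (i - 1) + 1)).
  destruct (records_values F (y_pred_lb x hx i) n (i - 1) (F (i - 1) + 1))
    as [Hlen Hval].
  { unfold F; specialize (hx (i - 1)); lia. }
  { replace (i - 1 - Z.of_nat n) with (l - 1) by lia; apply y_neg_pred_L, hL. }
  { intros k Hk; apply (y_nonneg_from_L x i l hL); lia. }
  set (s := records F (i - 1) n (F (i - 1) + 1)) in *.
  split; [apply records_sorted |].
  split; [|split; [|split]].
  - intros j; unfold s; rewrite (child_iff_L x i l hL), In_records_top; unfold F.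
    split; intros (Hj & Hrec); (split; [lia | intros m Hm; apply Hrec; lia]).
  - rewrite Hlen; unfold F; specialize (hx (i - 1)); lia.
  - intros m Hm; specialize (Hval (m - 1)%nat ltac:(lia)); unfold F in Hval; lia.
  - intros m Hm i' _.
    assert (Hrec : In (nth (m - 1) s 0) s) by (apply nth_In; lia).
    apply In_records_top in Hrec.
    rewrite (record_rightmost F l (i - 1) (nth (m - 1) s 0)) by (lia || apply Hrec).
    specialize (Hval (m - 1)%nat ltac:(lia)); unfold F in *.
    rewrite Hval, Hlast.
    replace (x (i - 1) + 1 - 1 - Z.of_nat (m - 1)) with (x (i - 1) + 1 - Z.of_nat m)
      by lia.
    reflexivity.
Qed.
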